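(* Let $\omega=-\frac12+i\frac{\sqrt3}{2}$ and let the Eisenstein lattice be $\{m+n\omega : m,n\in\mathbb{Z}\}\subset\mathbb{C}$. Up to Euclidean motions (isometries of the plane), there are exactly two equable triangles whose vertices all lie on the Eisenstein lattice. They are realized by the following vertices: (a) $A=8+4\omega$, $B=4+8\omega$, $C=0$; (b) $A=6+3\omega$, $B=8+16\omega$, $C=0$.
   Context: A triangle is a non-degenerate triangle in the plane $\mathbb{C}\cong\mathbb{R}^2$. A triangle is called equable if its perimeter equals its area (as real numbers). *)

(* the plane C ≅ R^2 is modelled as R * R (x = Re, y = Im). *)
From Stdlib Require Import Reals Lra ZArith List Permutation.
Open Scope R_scope.

Definition point := (R * R)%type.

Definition dist (p q : point) : R :=
  sqrt ((fst p - fst q) ^ 2 + (snd p - snd q) ^ 2).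

(* omega = -1/2 + i sqrt(3)/2; the point m + n*omega *)
Definition eis (m n : Z) : point :=
  (IZR m - IZR n / 2, IZR n * sqrt 3 / 2).

Definition on_eisenstein (p : point) : Prop :=
  exists m n : Z, p = eis m n.

Definition cross (A B C : point) : R :=
  (fst B - fst A) * (snd C - snd A) - (snd B - snd A) * (fst C - fst A).

Definition nondegenerate (A B C : point) : Prop := cross A B C <> 0.

Definition perimeter (A B C : point) : R := dist A B + dist B C + dist C A.

Definition area (A B C : point) : R := Rabs (cross A B C) / 2.

Definition equable (A B C : point) : Prop :=
  nondegenerate A B C /\ perimeter A B C = area A B C.

Definition isometry (f : point -> point) : Prop :=
  forall p q, dist (f p) (f q) = dist p q.

(* Triangles (as unordered vertex triples) congruent by a Euclidean motion *)
Definition congruent (A B C A' B' C' : point) : Prop :=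
  exists f : point -> point, isometry f /\
    Permutation (f A :: f B :: f C :: nil) (A' :: B' :: C' :: nil).

Definition eis_triangle (A B C : point) : Prop :=
  on_eisenstein A /\ on_eisenstein B /\ on_eisenstein C.

(* The squared side lengths of a triangle on the Eisenstein lattice are integers
   N(m + n w) = m^2 - m n + n^2, and its area is sqrt 3 / 4 times an integer D.  If the
   perimeter equals the area, then a sum of three square roots of integers is a rational
   multiple of sqrt 3; squaring twice shows that each squared side is 3 k^2, so the sides
   are k_i sqrt 3 with 4 (k_1 + k_2 + k_3) = |D|.  Heron's formula then turns equability
   into 3 u v w = 16 (u + v + w) for u = k_2 + k_3 - k_1, v, w; since u + v, v + w, w + u
   are even, the only solutions are (4, 4, 4) and the permutations of (2, 4, 12), i.e.
   sides (4, 4, 4) sqrt 3 and (3, 7, 8) sqrt 3.  Side-side-side congruence finishes. *)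

From Stdlib Require Import Reals ZArith List Permutation Znumtheory Lia Lra.
Import ListNotations.
Open Scope R_scope.

(** * Side-side-side congruence *)

Definition sqdist (p q : point) : R := (fst p - fst q) ^ 2 + (snd p - snd q) ^ 2.

Lemma dist_sqdist (p q : point) : dist p q = sqrt (sqdist p q).
Proof. reflexivity. Qed.

Lemma sqdist_nonneg (p q : point) : 0 <= sqdist p q.
Proof. unfold sqdist; apply Rplus_le_le_0_compat; apply pow2_ge_0. Qed.

Lemma sqdist_of_dist (p q p' q' : point) :
  dist p q = dist p' q' -> sqdist p q = sqdist p' q'.
Proof. rewrite !dist_sqdist; apply sqrt_inj; apply sqdist_nonneg. Qed.

Lemma sqdist_sym (p q : point) : sqdist p q = sqdist q p.
Proof. unfold sqdist; ring. Qed.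

Lemma cross_sq_sqdist (A B C : point) :
  4 * cross A B C ^ 2 =
  4 * sqdist A B * sqdist A C - (sqdist A B + sqdist A C - sqdist B C) ^ 2.
Proof. unfold cross, sqdist; ring. Qed.

Definition motion (c s : R) (A X p : point) : point :=
  (fst X + (c * (fst p - fst A) - s * (snd p - snd A)),
   snd X + (s * (fst p - fst A) + c * (snd p - snd A))).

Lemma motion_isometry (c s : R) (A X : point) : c ^ 2 + s ^ 2 = 1 -> isometry (motion c s A X).
Proof.
  intros Hcs p q; rewrite !dist_sqdist; f_equal.
  transitivity ((c ^ 2 + s ^ 2) * sqdist p q); [|rewrite Hcs; ring].
  unfold sqdist, motion; cbn [fst snd]; ring.
Qed.

Definition conj_point (p : point) : point := (fst p, - snd p).

Lemma sqdist_conj (p q : point) : sqdist (conj_point p) (conj_point q) = sqdist p q.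
Proof. unfold sqdist, conj_point; cbn [fst snd]; ring. Qed.

Lemma cross_conj (A B C : point) :
  cross (conj_point A) (conj_point B) (conj_point C) = - cross A B C.
Proof. unfold cross, conj_point; cbn [fst snd]; ring. Qed.

Lemma rotation_of_dot_cross (u1 u2 w1 w2 v1 v2 z1 z2 : R) :
  u1 ^ 2 + u2 ^ 2 <> 0 -> u1 ^ 2 + u2 ^ 2 = v1 ^ 2 + v2 ^ 2 ->
  u1 * w1 + u2 * w2 = v1 * z1 + v2 * z2 -> u1 * w2 - u2 * w1 = v1 * z2 - v2 * z1 ->
  exists c s, c ^ 2 + s ^ 2 = 1 /\
    c * u1 - s * u2 = v1 /\ s * u1 + c * u2 = v2 /\
    c * w1 - s * w2 = z1 /\ s * w1 + c * w2 = z2.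
Proof.
  set (L := u1 ^ 2 + u2 ^ 2); intros HL HLv Hdot Hcross.
  exists ((u1 * v1 + u2 * v2) / L), ((u1 * v2 - u2 * v1) / L).
  split.
  { assert (Lagrange : (u1 * v1 + u2 * v2) ^ 2 + (u1 * v2 - u2 * v1) ^ 2 = L * L)
      by (rewrite HLv at 2; unfold L; ring).
    transitivity (((u1 * v1 + u2 * v2) ^ 2 + (u1 * v2 - u2 * v1) ^ 2) / (L * L));
      [field; exact HL|].
    rewrite Lagrange; field; exact HL. }
  repeat split; field_simplify_eq; auto; unfold L in *.
  - ring.
  - ring.
  (* [L w = (u.w) u + (u x w) u^perp], and likewise for [v] and [z] *)
  - transitivity ((u1 * w1 + u2 * w2) * v1 - (u1 * w2 - u2 * w1) * v2); [ring|].
    rewrite Hdot, Hcross, HLv; ring.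
  - transitivity ((u1 * w1 + u2 * w2) * v2 + (u1 * w2 - u2 * w1) * v1); [ring|].
    rewrite Hdot, Hcross, HLv; ring.
Qed.

Lemma sss_isometry_oriented (A B C X Y Z : point) :
  sqdist A B <> 0 ->
  sqdist A B = sqdist X Y -> sqdist A C = sqdist X Z -> sqdist B C = sqdist Y Z ->
  cross A B C = cross X Y Z ->
  exists f, isometry f /\ f A = X /\ f B = Y /\ f C = Z.
Proof.
  destruct A as [a1 a2], B as [b1 b2], C as [c1 c2], X as [x1 x2], Y as [y1 y2], Z as [z1 z2].
  unfold sqdist, cross; cbn [fst snd]; intros HL HAB HAC HBC Hcross.
  destruct (rotation_of_dot_cross (b1 - a1) (b2 - a2) (c1 - a1) (c2 - a2)
                                  (y1 - x1) (y2 - x2) (z1 - x1) (z2 - x2))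
    as (c & s & Hcs & HB1 & HB2 & HC1 & HC2); [contradict HL; lra | lra | lra | lra |].
  exists (motion c s (a1, a2) (x1, x2)).
  split; [now apply motion_isometry|].
  unfold motion; cbn [fst snd]; repeat split; f_equal; lra.
Qed.

Lemma sss_isometry (A B C X Y Z : point) :
  nondegenerate A B C ->
  dist A B = dist X Y -> dist B C = dist Y Z -> dist C A = dist Z X ->
  exists f, isometry f /\ f A = X /\ f B = Y /\ f C = Z.
Proof.
  intros ND HAB HBC HCA.
  apply sqdist_of_dist in HAB, HBC, HCA.
  rewrite (sqdist_sym C A), (sqdist_sym Z X) in HCA.
  assert (HL : sqdist A B <> 0).
  { unfold nondegenerate in ND; contradict ND.
    destruct A as [a1 a2], B as [b1 b2]; unfold sqdist in ND; cbn [fst snd] in ND.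
    destruct (Rplus_sqr_eq_0 (a1 - b1) (a2 - b2)) as [E1 E2]; [now rewrite !Rsqr_pow2|].
    unfold cross; cbn [fst snd]; replace b1 with a1 by lra; replace b2 with a2 by lra; ring. }
  assert (Hsq : cross A B C ^ 2 = cross X Y Z ^ 2).
  { apply (Rmult_eq_reg_l 4); [|lra]. rewrite !cross_sq_sqdist, HAB, HBC, HCA; reflexivity. }
  assert (Hcases : cross A B C = cross X Y Z \/ cross A B C = - cross X Y Z) by
    (apply Rsqr_eq; unfold Rsqr; lra).
  destruct Hcases as [Hcross | Hcross].
  - now apply sss_isometry_oriented.
  - destruct (sss_isometry_oriented (conj_point A) (conj_point B) (conj_point C) X Y Z)
      as (f & Hf & FA & FB & FC); rewrite ?sqdist_conj, ?cross_conj; try lra.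
    exists (fun p => f (conj_point p)); split; [|easy].
    intros p q. rewrite Hf, !dist_sqdist, sqdist_conj; reflexivity.
Qed.

Lemma congruent_of_sides (A B C X Y Z : point) :
  nondegenerate A B C ->
  dist A B = dist X Y -> dist B C = dist Y Z -> dist C A = dist Z X ->
  congruent A B C X Y Z.
Proof.
  intros ND HAB HBC HCA.
  destruct (sss_isometry A B C X Y Z ND HAB HBC HCA) as (f & Hf & <- & <- & <-).
  exists f; split; [exact Hf | apply Permutation_refl].
Qed.

Lemma congruent_rotate (A B C X Y Z : point) :
  congruent A B C Y Z X -> congruent A B C X Y Z.
Proof.
  intros (f & Hf & HP); exists f; split; [exact Hf|].
  apply (Permutation_trans HP), Permutation_sym, (Permutation_cons_append [Y; Z] X).
Qed.

Lemma congruent_reverse (A B C X Y Z : point) :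
  congruent A B C Z Y X -> congruent A B C X Y Z.
Proof.
  intros (f & Hf & HP); exists f; split; [exact Hf|].
  apply (Permutation_trans HP), Permutation_sym, (Permutation_rev [X; Y; Z]).
Qed.

Lemma congruent_side_in (A B C X Y Z : point) :
  congruent A B C X Y Z ->
  exists U V, In U [X; Y; Z] /\ In V [X; Y; Z] /\ dist A B = dist U V.
Proof.
  intros (f & Hf & HP).
  exists (f A), (f B); split; [|split].
  - apply (Permutation_in _ HP); simpl; auto.
  - apply (Permutation_in _ HP); simpl; auto.
  - symmetry; apply Hf.
Qed.

(** * Eisenstein coordinates *)

(* [eis_norm m n] is the squared modulus of [m + n w]. *)
Definition eis_norm (m n : Z) : Z := (m * m - m * n + n * n)%Z.

Lemma eis_norm_nonneg (m n : Z) : (0 <= eis_norm m n)%Z.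
Proof. unfold eis_norm; nia. Qed.

Lemma sqdist_eis (a b c d : Z) : sqdist (eis a b) (eis c d) = IZR (eis_norm (a - c) (b - d)).
Proof.
  unfold sqdist, eis, eis_norm; cbn [fst snd].
  rewrite plus_IZR, !minus_IZR, !mult_IZR, !minus_IZR.
  transitivity ((IZR a - IZR c - (IZR b - IZR d) / 2) ^ 2 + sqrt 3 ^ 2 * ((IZR b - IZR d) / 2) ^ 2);
    [field|].
  rewrite pow2_sqrt by lra; field.
Qed.

Lemma dist_eis (a b c d : Z) : dist (eis a b) (eis c d) = sqrt (IZR (eis_norm (a - c) (b - d))).
Proof. now rewrite dist_sqdist, sqdist_eis. Qed.

Lemma cross_eis (a1 a2 b1 b2 c1 c2 : Z) :
  cross (eis a1 a2) (eis b1 b2) (eis c1 c2) =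
  sqrt 3 / 2 * IZR ((b1 - a1) * (c2 - a2) - (b2 - a2) * (c1 - a1)).
Proof.
  unfold cross, eis; cbn [fst snd].
  rewrite !minus_IZR, !mult_IZR, !minus_IZR; field.
Qed.

Lemma eis_heron (a1 a2 b1 b2 c1 c2 : Z) :
  let n1 := eis_norm (a1 - b1) (a2 - b2) in
  let n2 := eis_norm (b1 - c1) (b2 - c2) in
  let n3 := eis_norm (c1 - a1) (c2 - a2) in
  let D := ((b1 - a1) * (c2 - a2) - (b2 - a2) * (c1 - a1))%Z in
  (3 * (D * D) = 4 * n1 * n3 - (n1 + n3 - n2) ^ 2)%Z.
Proof. unfold eis_norm; cbv zeta; ring. Qed.

(** * Square roots of integers *)

Lemma Z_square_of_rational_square (M K n : Z) :
  K <> 0%Z -> (M * M = n * (K * K))%Z -> exists j, n = (j * j)%Z.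
Proof.
  intros HK HMK.
  set (g := Z.gcd M K).
  assert (Hg : g <> 0%Z) by (intro E; apply HK, (Z.gcd_eq_0_r M K), E).
  pose proof (Z.gcd_div_gcd M K g Hg eq_refl) as Hmk.
  destruct (Z.gcd_divide_l M K) as [m Hm], (Z.gcd_divide_r M K) as [k Hk]; fold g in Hm, Hk.
  assert (Em : (M / g = m)%Z) by (rewrite Hm; apply Z.div_mul, Hg).
  assert (Ek : (K / g = k)%Z) by (rewrite Hk; apply Z.div_mul, Hg).
  rewrite Em, Ek in Hmk.
  assert (Hsq : (m * m = n * (k * k))%Z).
  { apply (Z.mul_reg_l _ _ (g * g)); [lia|]. rewrite Hm, Hk in HMK; nia. }
  assert (Hkm : (k | m)%Z).
  { apply (Z.gauss k m m); [exists (n * k)%Z; lia | now rewrite Z.gcd_comm]. }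
  assert (Hk1 : (k | 1)%Z)
    by (rewrite <- Hmk; apply Z.gcd_greatest; [exact Hkm | apply Z.divide_refl]).
  exists m; destruct (Z.divide_1_r _ Hk1); subst k; lia.
Qed.

Lemma three_mul_square (n j : Z) :
  (3 * n = j * j)%Z -> exists k, (0 <= k)%Z /\ n = (3 * k * k)%Z.
Proof.
  intros H.
  assert (H3 : (3 | j)%Z).
  { destruct (prime_mult 3 prime_3 j j) as [D|D]; [exists n; lia | exact D | exact D]. }
  destruct H3 as [m ->].
  exists (Z.abs m); split; [lia|].
  destruct (Z.abs_spec m) as [[_ ->]|[_ ->]]; lia.
Qed.

Lemma sqrt_IZR_rational (c K M : Z) :
  (0 <= c)%Z -> K <> 0%Z -> IZR K * sqrt (IZR c) = IZR M -> exists j, c = (j * j)%Z.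
Proof.
  intros Hc HK E.
  apply (Z_square_of_rational_square M K c HK), eq_IZR.
  rewrite !mult_IZR, <- E.
  transitivity (IZR K * IZR K * (sqrt (IZR c) * sqrt (IZR c))); [ring|].
  rewrite sqrt_sqrt by (apply IZR_le; exact Hc); ring.
Qed.

Lemma sum_sqrt_IZR_rational (a b c p q : Z) :
  (0 <= a)%Z -> (0 <= b)%Z -> (0 <= c)%Z -> (0 < p)%Z -> (0 < q)%Z ->
  IZR q * (sqrt (IZR a) + sqrt (IZR b) + sqrt (IZR c)) = IZR p ->
  exists j, c = (j * j)%Z.
Proof.
  intros Ha Hb Hc Hp Hq E.
  pose proof (sqrt_sqrt (IZR a) ltac:(now apply IZR_le)) as Sa.
  pose proof (sqrt_sqrt (IZR b) ltac:(now apply IZR_le)) as Sb.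
  pose proof (sqrt_sqrt (IZR c) ltac:(now apply IZR_le)) as Sc.
  pose proof (sqrt_pos (IZR a)); pose proof (sqrt_pos (IZR b)); pose proof (sqrt_pos (IZR c)).
  pose proof (IZR_lt _ _ Hp); pose proof (IZR_lt _ _ Hq).
  set (x := sqrt (IZR a)) in *; set (y := sqrt (IZR b)) in *; set (z := sqrt (IZR c)) in *.
  (* squaring [q (x + y) = p - q z] isolates [x y], squaring again isolates [z] *)
  set (r := (p * p + q * q * (c - a - b))%Z).
  assert (Exy : 2 * IZR q ^ 2 * (x * y) = IZR r - 2 * IZR p * IZR q * z).
  { unfold r; rewrite plus_IZR, !mult_IZR, !minus_IZR, <- E, <- Sa, <- Sb, <- Sc; ring. }
  destruct (Z.eq_dec r 0) as [r0 | r0].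
  - exists 0%Z. rewrite r0 in Exy.
    assert (0 <= IZR p * IZR q * z) by (apply Rmult_le_pos; [nra | assumption]).
    assert (0 <= IZR q ^ 2 * (x * y)) by (apply Rmult_le_pos; [nra | now apply Rmult_le_pos]).
    assert (Hz : IZR p * IZR q * z = 0) by lra.
    apply Rmult_integral in Hz as [Hpq | Hz]; [nra|].
    apply eq_IZR; rewrite mult_IZR, <- Sc, Hz; ring.
  - apply (sqrt_IZR_rational c (4 * r * p * q)
                              (r * r + 4 * p * p * q * q * c - 4 * q * q * q * q * a * b));
      [exact Hc | lia |].
    assert (Sq : (2 * IZR q ^ 2 * (x * y)) ^ 2 = (IZR r - 2 * IZR p * IZR q * z) ^ 2)
      by now rewrite Exy.
    fold z; rewrite minus_IZR, plus_IZR, !mult_IZR, <- Sa, <- Sb, <- Sc; lra.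
Qed.

Lemma sqrt_three_mul (n : Z) : (0 <= n)%Z -> sqrt (IZR (3 * n)) = sqrt 3 * sqrt (IZR n).
Proof. intros Hn; rewrite mult_IZR; apply sqrt_mult; [lra | now apply IZR_le]. Qed.

Lemma sqrt_three_mul_square (k : Z) : (0 <= k)%Z -> sqrt (IZR (3 * k * k)) = IZR k * sqrt 3.
Proof.
  intros Hk; rewrite <- Z.mul_assoc, sqrt_three_mul by nia.
  rewrite mult_IZR, sqrt_square by (now apply IZR_le); ring.
Qed.

Lemma three_mul_square_of_sum_sqrt (n1 n2 n3 Q : Z) :
  (0 <= n1)%Z -> (0 <= n2)%Z -> (0 <= n3)%Z -> (0 < Q)%Z ->
  4 * (sqrt (IZR n1) + sqrt (IZR n2) + sqrt (IZR n3)) = sqrt 3 * IZR Q ->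
  exists k, (0 <= k)%Z /\ n3 = (3 * k * k)%Z.
Proof.
  intros H1 H2 H3 HQ E.
  destruct (sum_sqrt_IZR_rational (3 * n1) (3 * n2) (3 * n3) (3 * Q) 4) as [j Hj];
    [lia | lia | lia | lia | lia | | exact (three_mul_square n3 j Hj)].
  rewrite !sqrt_three_mul, mult_IZR by assumption.
  transitivity (sqrt 3 * (4 * (sqrt (IZR n1) + sqrt (IZR n2) + sqrt (IZR n3)))); [ring|].
  rewrite E, <- Rmult_assoc, sqrt_sqrt by lra; reflexivity.
Qed.

(** * The equation of an equable triangle *)

Section HeronEquation.
Local Open Scope Z_scope.

(* both bounds come from [3 u v w = 16 (u + v + w) <= 48 w] *)
Lemma heron_equation_bounds (u v w : Z) :
  0 < u <= v -> v <= w -> 3 * u * v * w = 16 * (u + v + w) -> u <= 4 /\ v <= 16.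
Proof.
  intros Huv Hvw E.
  assert (Huw : u * u * w <= u * v * w) by (apply Z.mul_le_mono_nonneg_r; nia).
  assert (Hvw' : v * w <= u * v * w) by nia.
  assert (Hu : u * u <= 16) by (apply Z.mul_le_mono_pos_r with (3 * w); lia).
  split; nia.
Qed.

(* For a triangle with sides k_1 sqrt 3, k_2 sqrt 3, k_3 sqrt 3, Heron's formula makes
   "area = perimeter" equivalent to this equation. *)
Lemma heron_equation_sorted (k1 k2 k3 : Z) :
  k3 <= k2 <= k1 -> 0 < k2 + k3 - k1 ->
  3 * (k2 + k3 - k1) * (k1 + k3 - k2) * (k1 + k2 - k3) = 16 * (k1 + k2 + k3) ->
  (k1 = 4 /\ k2 = 4 /\ k3 = 4) \/ (k1 = 8 /\ k2 = 7 /\ k3 = 3).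
Proof.
  intros Hord Hpos E.
  remember (k2 + k3 - k1) as u eqn:Hu; remember (k1 + k3 - k2) as v eqn:Hv;
    remember (k1 + k2 - k3) as w eqn:Hw.
  destruct (heron_equation_bounds u v w ltac:(lia) ltac:(lia) ltac:(lia)) as [Hu4 Hv16].
  (* finitely many [(u, v)] remain, and for each the equation is linear in [w]; the
     parity of [u + v = 2 k3] and [v + w = 2 k1] excludes the odd solutions such as
     [(1, 8, 18)] *)
  assert (Hu' : u = 1 \/ u = 2 \/ u = 3 \/ u = 4) by lia.
  assert (Hv' : exists n : nat, v = Z.of_nat n /\ (n <= 16)%nat) by (exists (Z.to_nat v); lia).
  destruct Hv' as (n & -> & Hn).
  destruct Hu' as [-> | [-> | [-> | ->]]];
    do 17 (destruct n as [|n]; [cbn [Z.of_nat Pos.of_succ_nat Pos.succ] in *; lia|]); lia.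
Qed.

Lemma pos_of_pairwise_sums_nonneg (u v w : Z) :
  0 <= u + v -> 0 <= v + w -> 0 <= u + w -> 0 < u * v * w -> 0 < u /\ 0 < v /\ 0 < w.
Proof.
  intros Huv Hvw Huw H.
  assert (Hnonpos : forall a b c, 0 <= a + b -> 0 <= a + c -> a <= 0 -> a * b * c <= 0).
  { intros a b c Hab Hac Ha; apply Z.mul_nonpos_nonneg; [apply Z.mul_nonpos_nonneg|]; lia. }
  destruct (Z_lt_le_dec 0 u) as [Hu|Hu]; [|specialize (Hnonpos u v w); lia].
  destruct (Z_lt_le_dec 0 v) as [Hv|Hv]; [|specialize (Hnonpos v u w); lia].
  destruct (Z_lt_le_dec 0 w) as [Hw|Hw]; [|specialize (Hnonpos w u v); lia].
  auto.
Qed.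

Definition equable_side_triple (k1 k2 k3 : Z) : Prop :=
  (k1 = 4 /\ k2 = 4 /\ k3 = 4) \/
  (k1 = 3 /\ k2 = 7 /\ k3 = 8) \/ (k1 = 3 /\ k2 = 8 /\ k3 = 7) \/
  (k1 = 7 /\ k2 = 3 /\ k3 = 8) \/ (k1 = 7 /\ k2 = 8 /\ k3 = 3) \/
  (k1 = 8 /\ k2 = 3 /\ k3 = 7) \/ (k1 = 8 /\ k2 = 7 /\ k3 = 3).

Lemma equable_side_triple_of_heron (k1 k2 k3 : Z) :
  0 <= k1 -> 0 <= k2 -> 0 <= k3 -> 0 < k1 + k2 + k3 ->
  3 * (k2 + k3 - k1) * (k1 + k3 - k2) * (k1 + k2 - k3) = 16 * (k1 + k2 + k3) ->
  equable_side_triple k1 k2 k3.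
Proof.
  intros H1 H2 H3 HP E.
  destruct (pos_of_pairwise_sums_nonneg (k2 + k3 - k1) (k1 + k3 - k2) (k1 + k2 - k3))
    as (Hu & Hv & Hw); [lia | lia | lia | lia |].
  destruct (Z.le_ge_cases k1 k2), (Z.le_ge_cases k2 k3), (Z.le_ge_cases k1 k3).
  all: first
    [ pose proof (heron_equation_sorted k1 k2 k3 ltac:(lia) ltac:(lia) ltac:(lia)) as Hs
    | pose proof (heron_equation_sorted k1 k3 k2 ltac:(lia) ltac:(lia) ltac:(lia)) as Hs
    | pose proof (heron_equation_sorted k2 k1 k3 ltac:(lia) ltac:(lia) ltac:(lia)) as Hs
    | pose proof (heron_equation_sorted k2 k3 k1 ltac:(lia) ltac:(lia) ltac:(lia)) as Hs
    | pose proof (heron_equation_sorted k3 k1 k2 ltac:(lia) ltac:(lia) ltac:(lia)) as Hs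
    | pose proof (heron_equation_sorted k3 k2 k1 ltac:(lia) ltac:(lia) ltac:(lia)) as Hs ].
  all: destruct Hs as [(-> & -> & ->) | (-> & -> & ->)].
  all: unfold equable_side_triple; intuition auto.
Qed.

End HeronEquation.

(** * Classification *)

Lemma equable_eis_side_multiples (a1 a2 b1 b2 c1 c2 : Z) :
  equable (eis a1 a2) (eis b1 b2) (eis c1 c2) ->
  exists k1 k2 k3,
    eis_norm (a1 - b1) (a2 - b2) = (3 * k1 * k1)%Z /\
    eis_norm (b1 - c1) (b2 - c2) = (3 * k2 * k2)%Z /\
    eis_norm (c1 - a1) (c2 - a2) = (3 * k3 * k3)%Z /\
    equable_side_triple k1 k2 k3.
Proof.
  unfold equable, nondegenerate, perimeter, area; rewrite !dist_eis, cross_eis.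
  set (D := ((b1 - a1) * (c2 - a2) - (b2 - a2) * (c1 - a1))%Z).
  set (n1 := eis_norm (a1 - b1) (a2 - b2)); set (n2 := eis_norm (b1 - c1) (b2 - c2));
    set (n3 := eis_norm (c1 - a1) (c2 - a2)).
  intros [ND E].
  assert (HD : (0 < Z.abs D)%Z)
    by (enough (D <> 0%Z) by lia; intros H0; apply ND; rewrite H0; ring).
  assert (Hsum : 4 * (sqrt (IZR n1) + sqrt (IZR n2) + sqrt (IZR n3)) = sqrt 3 * IZR (Z.abs D)).
  { rewrite E, abs_IZR, Rabs_mult, (Rabs_pos_eq (sqrt 3 / 2)) by (pose proof (sqrt_pos 3); lra).
    field. }
  pose proof (eis_norm_nonneg (a1 - b1) (a2 - b2)).
  pose proof (eis_norm_nonneg (b1 - c1) (b2 - c2)).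
  pose proof (eis_norm_nonneg (c1 - a1) (c2 - a2)).
  destruct (three_mul_square_of_sum_sqrt n2 n3 n1 (Z.abs D)) as (k1 & K1 & N1);
    [assumption .. | rewrite <- Hsum; ring |].
  destruct (three_mul_square_of_sum_sqrt n3 n1 n2 (Z.abs D)) as (k2 & K2 & N2);
    [assumption .. | rewrite <- Hsum; ring |].
  destruct (three_mul_square_of_sum_sqrt n1 n2 n3 (Z.abs D)) as (k3 & K3 & N3);
    [assumption .. |].
  exists k1, k2, k3; repeat split; try assumption.
  assert (HP : (4 * (k1 + k2 + k3) = Z.abs D)%Z).
  { apply eq_IZR, (Rmult_eq_reg_l (sqrt 3)); [|apply Rgt_not_eq, sqrt_lt_R0; lra].
    rewrite <- Hsum, N1, N2, N3, !sqrt_three_mul_square, mult_IZR, !plus_IZR by assumption; ring. }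
  pose proof (eis_heron a1 a2 b1 b2 c1 c2) as Heron; cbv zeta in Heron; fold n1 n2 n3 D in Heron.
  rewrite <- Z.abs_square, N1, N2, N3, <- HP in Heron.
  apply equable_side_triple_of_heron; [assumption .. | lia |].
  apply (Z.mul_reg_l _ _ (3 * (k1 + k2 + k3))); [lia | lia].
Qed.

Lemma equable_eis_of_side_multiples (a1 a2 b1 b2 c1 c2 k1 k2 k3 : Z) :
  (0 <= k1)%Z -> (0 <= k2)%Z -> (0 <= k3)%Z ->
  eis_norm (a1 - b1) (a2 - b2) = (3 * k1 * k1)%Z ->
  eis_norm (b1 - c1) (b2 - c2) = (3 * k2 * k2)%Z ->
  eis_norm (c1 - a1) (c2 - a2) = (3 * k3 * k3)%Z ->
  Z.abs ((b1 - a1) * (c2 - a2) - (b2 - a2) * (c1 - a1)) = (4 * (k1 + k2 + k3))%Z ->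
  (0 < k1 + k2 + k3)%Z ->
  equable (eis a1 a2) (eis b1 b2) (eis c1 c2).
Proof.
  intros K1 K2 K3 N1 N2 N3 HD HP.
  unfold equable, nondegenerate, perimeter, area.
  rewrite !dist_eis, cross_eis, N1, N2, N3, !sqrt_three_mul_square by assumption.
  pose proof (sqrt_lt_R0 3 ltac:(lra)).
  rewrite Rabs_mult, <- abs_IZR, HD, (Rabs_pos_eq (sqrt 3 / 2)) by lra.
  split.
  - apply Rmult_integral_contrapositive; split; [lra | apply not_0_IZR; lia].
  - rewrite mult_IZR, !plus_IZR; field.
Qed.

Lemma congruent_eis_of_norms (a1 a2 b1 b2 c1 c2 x1 x2 y1 y2 z1 z2 : Z) :
  nondegenerate (eis a1 a2) (eis b1 b2) (eis c1 c2) ->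
  eis_norm (a1 - b1) (a2 - b2) = eis_norm (x1 - y1) (x2 - y2) ->
  eis_norm (b1 - c1) (b2 - c2) = eis_norm (y1 - z1) (y2 - z2) ->
  eis_norm (c1 - a1) (c2 - a2) = eis_norm (z1 - x1) (z2 - x2) ->
  congruent (eis a1 a2) (eis b1 b2) (eis c1 c2) (eis x1 x2) (eis y1 y2) (eis z1 z2).
Proof.
  intros ND H1 H2 H3; apply congruent_of_sides; [exact ND | ..]; rewrite !dist_eis; congruence.
Qed.

Lemma equable_eis_congruent_models (a1 a2 b1 b2 c1 c2 : Z) :
  equable (eis a1 a2) (eis b1 b2) (eis c1 c2) ->
  congruent (eis a1 a2) (eis b1 b2) (eis c1 c2) (eis 8 4) (eis 4 8) (eis 0 0) \/
  congruent (eis a1 a2) (eis b1 b2) (eis c1 c2) (eis 6 3) (eis 8 16) (eis 0 0).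
Proof.
  intros HE.
  destruct (equable_eis_side_multiples _ _ _ _ _ _ HE) as (k1 & k2 & k3 & N1 & N2 & N3 & K).
  (* the sides of (6 + 3w, 8 + 16w, 0) are (7, 8, 3) sqrt 3; rotating and reversing its
     vertex list realizes every order of these sides *)
  destruct K as [(-> & -> & ->) | [(-> & -> & ->) | [(-> & -> & ->) | [(-> & -> & ->) |
                 [(-> & -> & ->) | [(-> & -> & ->) | (-> & -> & ->)]]]]]];
    [ left
    | right; apply congruent_rotate, congruent_rotate
    | right; apply congruent_reverse, congruent_rotate, congruent_rotate
    | right; apply congruent_reverse, congruent_rotate
    | right
    | right; apply congruent_rotate
    | right; apply congruent_reverse ];
    (apply congruent_eis_of_norms;
     [exact (proj1 HE) | rewrite N1; reflexivity | rewrite N2; reflexivity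
     | rewrite N3; reflexivity]).
Qed.

Lemma models_not_congruent :
  ~ congruent (eis 8 4) (eis 4 8) (eis 0 0) (eis 6 3) (eis 8 16) (eis 0 0).
Proof.
  intros Hc.
  destruct (congruent_side_in _ _ _ _ _ _ Hc) as (U & V & HU & HV & E).
  apply sqdist_of_dist in E; rewrite sqdist_eis in E.
  destruct HU as [<- | [<- | [<- | []]]], HV as [<- | [<- | [<- | []]]];
    rewrite sqdist_eis in E; apply eq_IZR in E; discriminate.
Qed.

Theorem mainTheorem1 :
  (* both listed triangles are equable Eisenstein-lattice triangles *)
  equable (eis 8 4) (eis 4 8) (eis 0 0) /\
  equable (eis 6 3) (eis 8 16) (eis 0 0) /\
  (* they are not related by a Euclidean motion *)
  ~ congruent (eis 8 4) (eis 4 8) (eis 0 0) (eis 6 3) (eis 8 16) (eis 0 0) /\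
  (* every equable Eisenstein-lattice triangle is congruent to one of them *)
  (forall A B C : point,
     eis_triangle A B C -> equable A B C ->
     congruent A B C (eis 8 4) (eis 4 8) (eis 0 0) \/
     congruent A B C (eis 6 3) (eis 8 16) (eis 0 0)).
Proof.
  split; [|split; [|split]].
  - apply (equable_eis_of_side_multiples _ _ _ _ _ _ 4 4 4); easy.
  - apply (equable_eis_of_side_multiples _ _ _ _ _ _ 7 8 3); easy.
  - exact models_not_congruent.
  - intros A B C ((a1 & a2 & ->) & (b1 & b2 & ->) & (c1 & c2 & ->)).
    apply equable_eis_congruent_models.
Qed.
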